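(* Let $X$ and $Y$ be Tychonoff spaces, $\lambda\in\hat{P}(X\times Y)$, let $V_1,\dots,V_n$ be open sets in $X\times Y$ and $\varepsilon_0>0$. Then for every $\varepsilon>0$ there exist pairwise disjoint open sets $W_1,\dots,W_m\subset X\times Y$, each of the form $W_j=W_j'\times W_j''$ with $W_j'\subset X$ and $W_j''\subset Y$ open, and a number $\delta>0$ such that (i) $\lambda(V_i)-\sum_{\{j\colon W_j\subset V_i\}}\lambda(W_j)<\varepsilon$ for every $i=1,\dots,n$; (ii) $O(\lambda,W_1,\dots,W_m,\delta)\subset O(\lambda,V_1,\dots,V_n,\varepsilon_0)$; (iii) for $l=1,2$ and all $j',j''\in\{1,\dots,m\}$, either $\mathrm{pr}_l(W_{j'})\cap\mathrm{pr}_l(W_{j''})=\emptyset$ or $\mathrm{pr}_l(W_{j'})=\mathrm{pr}_l(W_{j''})$.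
   Context: For a Tychonoff space $Z$, $\hat{P}(Z)$ is the set of Radon probability measures on $Z$ (Borel probability measures $\mu$ with $\mu(A)=\sup\{\mu(K)\colon K\subset A \text{ compact}\}$ for all Borel $A$). For $\mu\in\hat{P}(Z)$, open sets $U_1,\dots,U_k\subset Z$ and $\eta>0$, $O(\mu,U_1,\dots,U_k,\eta)=\{\nu\in\hat{P}(Z)\colon \nu(U_i)>\mu(U_i)-\eta,\ i=1,\dots,k\}$; these sets form a base of the weak-* topology. $\mathrm{pr}_1,\mathrm{pr}_2$ are the coordinate projections of $X\times Y$. *)

From HB Require Import structures.
From mathcomp Require Import all_boot all_order all_algebra.
From mathcomp Require Import all_classical all_reals all_analysis.
Set Implicit Arguments. Unset Strict Implicit. Unset Printing Implicit Defensive.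
Import Order.TTheory GRing.Theory Num.Theory.
Import numFieldNormedType.Exports.
Local Open Scope classical_set_scope.
Local Open Scope ring_scope.

Definition tychonoff_space (T : topologicalType) : Prop :=
  completely_regular_space T /\ hausdorff_space T.

Definition borel_set (Z : topologicalType) (A : set Z) : Prop :=
  <<s [set U : set Z | open U] >> A.

Definition radon_prob (R : realType) (Z : topologicalType) (mu : set Z -> R) : Prop :=
  [/\ mu set0 = 0,
      (forall A, borel_set A -> 0 <= mu A),
      (forall F : nat -> set Z, (forall k, borel_set (F k)) ->
          (forall k l, k <> l -> F k `&` F l = set0) ->
          (fun n => \sum_(k < n) mu (F k)) @ \oo --> mu (\bigcup_k F k)),
      mu setT = 1 &
      (forall A, borel_set A ->
          mu A = sup [set mu K | K in [set K : set Z | compact K /\ K `<=` A]])].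

Definition Onbhd (R : realType) (Z : topologicalType) (mu : set Z -> R)
    (k : nat) (U : 'I_k -> set Z) (eta : R) : set (set Z -> R) :=
  [set nu | radon_prob nu /\ forall i : 'I_k, mu (U i) - eta < nu (U i)].

(* Inner regularity gives compact sets K_i in V_i carrying all of lam (V i) but
   e/2, and each K_i is covered by finitely many open rectangles U_k x U'_k inside
   V_i.  Each side U_k is shrunk to an open G_k with closure in U_k at a small cost
   in mass: a compact subset of fst^-1 (U_k) of almost full mass projects to a
   compact subset of U_k, which regularity of X separates from the complement of
   U_k (likewise H_k in U'_k).  The atoms of the family (G_k), i.e. the sets of
   points lying in G_k for k in S and outside the closure of G_k otherwise, are open
   and pairwise disjoint, and a point x with (x in U_k -> x in G_k) for all k lies in
   an atom contained in every U_k that contains x.  Products of atoms of (G_k) and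
   (H_k) therefore have equal or disjoint projections, and outside the small set
   of points lost by the shrinking they cover K_i by cells lying in V_i, which is
   (i).  As the cells are disjoint, nu (V i) is at least the sum of nu over the
   cells inside V_i, so (ii) holds once the error in (i) and m * delta are both
   at most eps0 / 2. *)

From HB Require Import structures.
From mathcomp Require Import all_boot all_order all_algebra.
From mathcomp Require Import all_classical all_reals all_analysis.
From mathcomp Require Import finmap ring lra.
Import Order.TTheory GRing.Theory Num.Theory.
Import numFieldNormedType.Exports.
Local Open Scope classical_set_scope.
Local Open Scope ring_scope.

Section borel_sets.
Context {Z : topologicalType}.

Lemma borel0 : borel_set (set0 : set Z).
Proof. exact: sigma_algebra0. Qed.

Lemma borel_open {A : set Z} : open A -> borel_set A.
Proof. by move=> oA; apply: sub_sigma_algebra. Qed.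

Lemma borelC {A : set Z} : borel_set A -> borel_set (~` A).
Proof. by move=> bA; rewrite -setTD; apply: sigma_algebraCD. Qed.

Lemma borel_closed {A : set Z} : closed A -> borel_set A.
Proof.
by move=> cA; rewrite -[A]setCK; apply: borelC; apply: borel_open; exact: closed_openC.
Qed.

Lemma borelU {A B : set Z} : borel_set A -> borel_set B -> borel_set (A `|` B).
Proof.
move=> bA bB; rewrite -bigcup2E; apply: sigma_algebra_bigcup => -[|[|k]] //=.
exact: borel0.
Qed.

Lemma borelD {A B : set Z} : borel_set A -> borel_set B -> borel_set (A `\` B).
Proof.
move=> bA bB; rewrite setDE -[A]setCK -setCU.
by apply: borelC; apply: borelU => //; exact: borelC.
Qed.

Lemma borel_bigsetU (I : Type) (s : seq I) (P : pred I) (F : I -> set Z) :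
  (forall i, borel_set (F i)) -> borel_set (\big[setU/set0]_(i <- s | P i) F i).
Proof.
by move=> bF; elim/big_ind: _ => // [|A B bA bB]; [exact: borel0|exact: borelU].
Qed.

End borel_sets.

Section radon_probability.
Context {R : realType} {Z : topologicalType} {mu : set Z -> R}.
Hypothesis hmu : radon_prob mu.

Lemma radon0 : mu set0 = 0.
Proof. by case: hmu. Qed.

Lemma radon_ge0 (A : set Z) : borel_set A -> 0 <= mu A.
Proof. by case: hmu => _ + _ _ _; apply. Qed.

Lemma radon_setU (A B : set Z) : borel_set A -> borel_set B ->
  A `&` B = set0 -> mu (A `|` B) = mu A + mu B.
Proof.
case: hmu => mu0 _ sigma_add _ _ bA bB AB0.
have bF k : borel_set (bigcup2 A B k) by case: k => [|[|k]] //=; exact: borel0.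
have dF k l : k <> l -> bigcup2 A B k `&` bigcup2 A B l = set0.
  by case: k => [|[|k]]; case: l => [|[|l]] //= _; rewrite ?set0I ?setI0 // setIC.
have := sigma_add _ bF dF; rewrite bigcup2E => sums_cvg.
apply: (cvg_unique _ sums_cvg); first exact: Rhausdorff.
apply: cvg_near_cst; exists 2%N => // -[|[|n]] //= _.
by rewrite !big_ord_recl /= big1 ?addr0.
Qed.

Lemma radon_setD (A B : set Z) : borel_set A -> borel_set B -> A `<=` B ->
  mu (B `\` A) = mu B - mu A.
Proof.
move=> bA bB AB; rewrite -{2}(setDUK AB) radon_setU ?setDIK //; last exact: borelD.
by rewrite [mu A + _]addrC addrK.
Qed.

Lemma radon_le (A B : set Z) : borel_set A -> borel_set B -> A `<=` B ->
  mu A <= mu B.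
Proof.
by move=> bA bB AB; rewrite -subr_ge0 -radon_setD //; apply: radon_ge0; exact: borelD.
Qed.

Lemma radon_setU_le (A B : set Z) : borel_set A -> borel_set B ->
  mu (A `|` B) <= mu A + mu B.
Proof.
move=> bA bB; have -> : A `|` B = A `|` (B `\` A) by rewrite setUDr setDv setD0.
rewrite radon_setU ?setDIK //; last exact: borelD.
by rewrite lerD2l; apply: radon_le => //; exact: borelD.
Qed.

Lemma radon_bigsetU (I : eqType) (s : seq I) (P : pred I) (F : I -> set Z) :
  uniq s -> (forall i, borel_set (F i)) ->
  (forall i j, i != j -> F i `&` F j = set0) ->
  mu (\big[setU/set0]_(i <- s | P i) F i) = \sum_(i <- s | P i) mu (F i).
Proof.
move=> + bF dF; elim: s => [_|a s IH /= /andP[s'a us]]; first by rewrite !big_nil radon0.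
rewrite !big_cons; case: ifP => _; last exact: IH.
rewrite radon_setU ?IH //; first exact: borel_bigsetU.
rewrite big_seq_cond; elim/big_rec: _ => [|i U /andP[si _] IHU]; first by rewrite setI0.
by rewrite setIUr IHU setU0 dF //; apply: contraNneq s'a => ->.
Qed.

Lemma radon_bigsetU_le (I : Type) (s : seq I) (P : pred I) (F : I -> set Z) :
  (forall i, borel_set (F i)) ->
  mu (\big[setU/set0]_(i <- s | P i) F i) <= \sum_(i <- s | P i) mu (F i).
Proof.
move=> bF; elim: s => [|a s IH]; first by rewrite !big_nil radon0.
rewrite !big_cons; case: ifP => _ //.
apply: le_trans (radon_setU_le _ _ (bF a) (borel_bigsetU _ s P F bF)) _.
by rewrite lerD2l.
Qed.

Lemma radon_inner_regular {A : set Z} {eta : R} :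
  hausdorff_space Z -> borel_set A -> 0 < eta ->
  exists K, [/\ compact K, K `<=` A & mu A - eta < mu K].
Proof.
move=> hZ bA eta0; case: hmu => _ _ _ muT inner.
have bK (K : set Z) : compact K -> borel_set K.
  by move=> cK; apply: borel_closed; exact: compact_closed hZ cK.
have : has_sup [set mu K | K in [set K | compact K /\ K `<=` A]].
  split; first by exists (mu set0), set0; split; [exact: compact0|].
  exists 1 => _ [K [cK _] <-]; rewrite -muT.
  by apply: radon_le => //; [exact: bK|apply: borel_open; exact: openT].
move=> /(sup_adherent eta0)[_ [K [cK KA] <-]]; rewrite -inner // => ?.
by exists K.
Qed.

End radon_probability.

Lemma fst_continuous {X Y : topologicalType} : continuous (@fst X Y).
Proof. by move=> p; apply: cvg_fst. Qed.

Lemma snd_continuous {X Y : topologicalType} : continuous (@snd X Y).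
Proof. by move=> p; apply: cvg_snd. Qed.

Lemma open_setX {X Y : topologicalType} (A : set X) (B : set Y) :
  open A -> open B -> open (A `*` B).
Proof.
move=> oA oB; apply: openI; apply: open_comp => // p _.
  exact: fst_continuous.
exact: snd_continuous.
Qed.

Lemma prod_hausdorff {X Y : topologicalType} :
  hausdorff_space X -> hausdorff_space Y -> hausdorff_space (X * Y)%type.
Proof.
move=> hX hY [x1 y1] [x2 y2]; rewrite cluster_cvgE /= => -[G PG [GtoQ psubG]].
congr pair; [apply: hX | apply: hY]; rewrite cluster_cvgE.
- exists (fst @ G); [exact: fmap_proper_filter|split].
  + exact: cvg_trans (cvg_app fst GtoQ) (fst_continuous _).
  + by move=> A /(fst_continuous (x1, y1)) /psubG.
- exists (snd @ G); [exact: fmap_proper_filter|split].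
  + exact: cvg_trans (cvg_app snd GtoQ) (snd_continuous _).
  + by move=> A /(snd_continuous (x1, y1)) /psubG.
Qed.

(* The library proves [compact_cover] for pointed spaces; a point of A will do. *)
Lemma compact_cover_compact {T : topologicalType} {A : set T} :
  compact A -> cover_compact A.
Proof.
have [->|/set0P[a _]] := eqVneq A set0; first by move=> _ I D f _ _; exists fset0.
pose pT : ptopologicalType := HB.pack T (isPointed.Build T a).
by move=> cA; exact: (eq_ind _ id cA _ (congr1 (fun P => P A) (@compact_cover pT))).
Qed.

Lemma regular_compact_shrink {T : topologicalType} (C U : set T) :
  regular_space T -> compact C -> open U -> C `<=` U ->
  exists G, [/\ open G, C `<=` G & closure G `<=` U].
Proof.
move=> rT cC oU CU.
have shrink_at x : exists N, C x -> [/\ open N, N x & closure N `<=` U].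
  have [Cx|] := pselect (C x); last by exists set0.
  have [B Bx clBU] := rT x U (open_nbhs_nbhs (conj oU (CU _ Cx))).
  exists B° => _; split; [exact: open_interior|exact: Bx|].
  by apply: (subset_trans _ clBU); apply: closureS; exact: interior_subset.
have [N hN] := choice shrink_at.
have oN x : C x -> open (N x) by move=> /hN[].
have [D DC CD] : finite_subset_cover C N C.
  apply: (compact_cover_compact cC _ _ _ oN) => x Cx.
  by exists x => //; have [] := hN x Cx.
exists (cover [set` D] N); split => //.
  by apply: bigcup_open => x Dx; have /DC := Dx; rewrite in_setE => /hN[].
rewrite /cover bigcup_fset big_seq; elim/big_ind: _ => [|A B AU BU|x Dx].
- by rewrite closure0.
- by rewrite closureU => y [/AU|/BU].
- by have /DC := Dx; rewrite in_setE => /hN[].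
Qed.

Lemma open_rectangle_nbhs {X Y : topologicalType} {V : set (X * Y)} {p : X * Y} :
  open V -> V p -> exists AB : set X * set Y,
    [/\ open AB.1, open AB.2, (AB.1 `*` AB.2) p & AB.1 `*` AB.2 `<=` V].
Proof.
rewrite openE => oV /oV; rewrite /interior => -[[A B] /= [Ap Bp] ABV].
exists (A°, B°); split => /=; [exact: open_interior|exact: open_interior| |].
  by split; apply: nbhs_singleton; apply: nbhs_interior.
by move=> q [/interior_subset Aq /interior_subset Bq]; apply: ABV.
Qed.

Lemma compact_rectangle_cover {X Y : topologicalType} {K V : set (X * Y)} :
  compact K -> open V -> K `<=` V ->
  exists E : {fset set X * set Y},
    (forall AB, AB \in E -> [/\ open AB.1, open AB.2 & AB.1 `*` AB.2 `<=` V]) /\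
    K `<=` \bigcup_(AB in [set` E]) (AB.1 `*` AB.2).
Proof.
move=> cK oV KV.
pose D := [set AB : set X * set Y | [/\ open AB.1, open AB.2 & AB.1 `*` AB.2 `<=` V]].
have [E ED KE] : finite_subset_cover D (fun AB => AB.1 `*` AB.2) K.
  apply: (compact_cover_compact cK) => [AB [oA oB _]|p Kp]; first exact: open_setX.
  by have [AB [oA oB ABp ABV]] := open_rectangle_nbhs oV (KV _ Kp); exists AB.
by exists E; split => // AB /ED; rewrite in_setE.
Qed.

Lemma compact_rectangle_covers {X Y : topologicalType} {n : nat}
    {K V : 'I_n -> set (X * Y)} :
  (forall i, compact (K i)) -> (forall i, open (V i)) -> (forall i, K i `<=` V i) ->
  exists F : {fset set X * set Y},
    (forall AB, AB \in F -> open AB.1 /\ open AB.2) /\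
    forall i p, K i p ->
      exists2 AB, AB \in F & (AB.1 `*` AB.2) p /\ AB.1 `*` AB.2 `<=` V i.
Proof.
move=> cK oV KV.
have [E hE] := choice (fun i => compact_rectangle_cover (cK i) (oV i) (KV i)).
exists (\big[fsetU/fset0]_(i < n) E i); split.
  move=> AB /bigfcupP[i _ ABi].
  by have [/(_ _ ABi)[]] := hE i.
move=> i p Kp; have [hEi /(_ _ Kp)[AB ABi ABp]] := hE i.
exists AB; first by apply/bigfcupP; exists i; rewrite ?mem_index_enum.
by have [] := hEi _ ABi.
Qed.

Definition disjoint_or_eq {T : Type} (A B : set T) : Prop :=
  A `&` B = set0 \/ A = B.

Lemma image_fst_setX {X Y : Type} (A : set X) (B : set Y) :
  B !=set0 -> fst @` (A `*` B) = A.
Proof.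
case=> y By; apply/seteqP; split => [_ [[x y'] [Ax _] <-] //|x Ax].
by exists (x, y).
Qed.

Lemma image_snd_setX {X Y : Type} (A : set X) (B : set Y) :
  A !=set0 -> snd @` (A `*` B) = B.
Proof.
case=> x Ax; apply/seteqP; split => [_ [[x' y] [_ By] <-] //|y By].
by exists (x, y).
Qed.

Lemma image_fst_setX_disjoint_or_eq {X Y : Type} (A A' : set X) (B B' : set Y) :
  disjoint_or_eq A A' -> disjoint_or_eq (fst @` (A `*` B)) (fst @` (A' `*` B')).
Proof.
have [->|/set0P/(image_fst_setX A)->] := eqVneq B set0.
  by left; rewrite setX0 image_set0 set0I.
have [->|/set0P/(image_fst_setX A')->] := eqVneq B' set0 => //.
by left; rewrite setX0 image_set0 setI0.
Qed.

Lemma image_snd_setX_disjoint_or_eq {X Y : Type} (A A' : set X) (B B' : set Y) :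
  disjoint_or_eq B B' -> disjoint_or_eq (snd @` (A `*` B)) (snd @` (A' `*` B')).
Proof.
have [->|/set0P/(image_snd_setX ^~ B)->] := eqVneq A set0.
  by left; rewrite set0X image_set0 set0I.
have [->|/set0P/(image_snd_setX ^~ B')->] := eqVneq A' set0 => //.
by left; rewrite set0X image_set0 setI0.
Qed.

Section atoms.
Context {T : topologicalType} {I : finType} (G : I -> set T).

(* Excluding the closure of G k, not just G k, is what keeps atoms open. *)
Definition atom (S : {set I}) : set T :=
  [set x | forall k, if k \in S then G k x else ~ closure (G k) x].

Lemma atom_open (S : {set I}) : (forall k, open (G k)) -> open (atom S).
Proof.
move=> oG; rewrite openE => x Sx.
apply: (@filter_forall T I (fun k y => if k \in S then G k y else ~ closure (G k) y)).
move=> k; apply: open_nbhs_nbhs; move: (Sx k); case: (k \in S) => /= Gx; split => //.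
exact/closed_openC/closed_closure.
Qed.

Lemma atom_disjoint (S S' : {set I}) : S != S' -> atom S `&` atom S' = set0.
Proof.
move=> /eqP SS'; apply/seteqP; split => // x [Sx S'x]; apply: SS'; apply/setP => k.
move: (Sx k) (S'x k); case: (k \in S); case: (k \in S') => //= Gx nGx.
  by case: nGx; exact: subset_closure.
by case: Gx; exact: subset_closure.
Qed.

Lemma atom_disjoint_or_eq (S S' : {set I}) : disjoint_or_eq (atom S) (atom S').
Proof. by have [->|/atom_disjoint] := eqVneq S S'; [right|left]. Qed.

Lemma atom_sub {S : {set I}} {k : I} : k \in S -> atom S `<=` G k.
Proof. by move=> kS x /(_ k); rewrite kS. Qed.

Lemma mem_atom_of (x : T) : (forall k, closure (G k) x -> G k x) ->
  atom [set k | `[< G k x >]] x.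
Proof. by move=> clG k; rewrite inE; case: asboolP => // nGx /clG. Qed.

End atoms.

Definition rectangle_defect {X Y : Type} {I : finType}
    (U G : I -> set X) (U' H : I -> set Y) : set (X * Y) :=
  \big[setU/set0]_k ((fst @^-1` U k `\` fst @^-1` G k) `|`
                     (snd @^-1` U' k `\` snd @^-1` H k)).

Lemma product_atoms {X Y : topologicalType} {I : finType}
    {U G : I -> set X} {U' H : I -> set Y} :
  (forall k, open (G k)) -> (forall k, open (H k)) ->
  (forall k, closure (G k) `<=` U k) -> (forall k, closure (H k) `<=` U' k) ->
  exists m (W1 : 'I_m -> set X) (W2 : 'I_m -> set Y),
    [/\ (forall j, open (W1 j)), (forall j, open (W2 j)),
        (forall j j', j != j' -> (W1 j `*` W2 j) `&` (W1 j' `*` W2 j') = set0),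
        (forall j j', disjoint_or_eq (W1 j) (W1 j') /\ disjoint_or_eq (W2 j) (W2 j')) &
        forall p, ~ rectangle_defect U G U' H p ->
          exists j, (W1 j `*` W2 j) p /\
            forall k, (U k `*` U' k) p -> W1 j `*` W2 j `<=` U k `*` U' k].
Proof.
move=> oG oH GU HU.
pose c (j : 'I_#|{: {set I} * {set I}}|) := enum_val j.
exists _, (fun j => atom G (c j).1), (fun j => atom H (c j).2); split.
- by move=> j; exact: atom_open.
- by move=> j; exact: atom_open.
- move=> j j' jj'; rewrite -setXI.
  have [e1|/atom_disjoint->] := eqVneq (c j).1 (c j').1; last by rewrite set0X.
  have [e2|/atom_disjoint->] := eqVneq (c j).2 (c j').2; last by rewrite setX0.
  have /enum_val_inj jj : c j = c j'.
    by rewrite [c j]surjective_pairing e1 e2 -surjective_pairing.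
  by rewrite jj eqxx in jj'.
- by move=> j j'; split; exact: atom_disjoint_or_eq.
move=> [x y] good.
have UGx k : U k x -> G k x.
  move=> Ux; apply: contra_notP good => nGx.
  by rewrite /rectangle_defect (bigD1 k) //=; do 2 left.
have UHy k : U' k y -> H k y.
  move=> Uy; apply: contra_notP good => nHy.
  by rewrite /rectangle_defect (bigD1 k) //=; left; right.
exists (enum_rank ([set k | `[< G k x >]], [set k | `[< H k y >]])%SET).
rewrite /c enum_rankK /=; split.
  split; apply: mem_atom_of => k clk.
    by apply: UGx; exact: GU clk.
  by apply: UHy; exact: HU clk.
move=> k [/UGx Gx /UHy Hy] q [/= Gq Hq].
have kx : k \in [set k | `[< G k x >]]%SET by rewrite inE; exact/asboolP.
have ky : k \in [set k | `[< H k y >]]%SET by rewrite inE; exact/asboolP.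
split; [exact: GU k _ (subset_closure (atom_sub G kx _ Gq))|
        exact: HU k _ (subset_closure (atom_sub H ky _ Hq))].
Qed.

Lemma borel_preimage_open {Z T : topologicalType} {f : Z -> T} {A : set T} :
  continuous f -> open A -> borel_set (f @^-1` A).
Proof. by move=> cf oA; apply: borel_open; apply: open_comp => // z _; exact: cf. Qed.

Lemma borel_preimage_setD {Z T : topologicalType} {f : Z -> T} {A B : set T} :
  continuous f -> open A -> open B -> borel_set (f @^-1` A `\` f @^-1` B).
Proof. by move=> cf oA oB; apply: borelD; exact: borel_preimage_open. Qed.

Lemma radon_shrink_preimage {R : realType} {Z T : topologicalType}
    {mu : set Z -> R} {f : Z -> T} {U : set T} {eta : R} :
  radon_prob mu -> hausdorff_space Z -> regular_space T -> continuous f ->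
  open U -> 0 < eta ->
  exists G, [/\ open G, closure G `<=` U & mu (f @^-1` U `\` f @^-1` G) < eta].
Proof.
move=> hmu hZ rT cf oU eta0.
have [L [cL LU muL]] := radon_inner_regular hmu hZ (borel_preimage_open cf oU) eta0.
have [G [oG fLG clGU]] : exists G, [/\ open G, f @` L `<=` G & closure G `<=` U].
  apply: regular_compact_shrink => //; last by move=> _ [z /LU Uz <-].
  apply: continuous_compact cL; exact: continuous_subspaceT.
exists G; split => //.
have bL : borel_set L by apply: borel_closed; exact: compact_closed hZ cL.
apply: (@le_lt_trans _ _ (mu (f @^-1` U `\` L))).
  apply: radon_le => //; first exact: borel_preimage_setD.
    exact: borelD (borel_preimage_open cf oU) bL.
  by move=> z [Uz nGz]; split => // Lz; apply: nGz; apply: fLG; exists z.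
rewrite radon_setD //; [lra|exact: borel_preimage_open].
Qed.

Lemma radon_shrink_rectangles {R : realType} {X Y : topologicalType} {I : finType}
    {lam : set (X * Y) -> R} {U : I -> set X} {U' : I -> set Y} {eps : R} :
  radon_prob lam -> hausdorff_space (X * Y)%type ->
  regular_space X -> regular_space Y ->
  (forall k, open (U k)) -> (forall k, open (U' k)) -> 0 < eps ->
  exists G H, [/\ (forall k, open (G k)), (forall k, open (H k)),
    (forall k, closure (G k) `<=` U k), (forall k, closure (H k) `<=` U' k) &
    lam (rectangle_defect U G U' H) <= eps].
Proof.
move=> hlam hXY rX rY oU oU' eps0.
pose eta := eps / 2 / #|{: I}|.+1%:R.
have eta0 : 0 < eta by rewrite !divr_gt0.
have [G hG] := choice (fun k => radon_shrink_preimage hlam hXY rX fst_continuous (oU k) eta0).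
have [H hH] := choice (fun k => radon_shrink_preimage hlam hXY rY snd_continuous (oU' k) eta0).
exists G, H; split; [by move=> k; case: (hG k)|by move=> k; case: (hH k)|
                     by move=> k; case: (hG k)|by move=> k; case: (hH k)|].
have bX k : borel_set (@fst X Y @^-1` U k `\` fst @^-1` G k).
  by have [oG _ _] := hG k; exact: borel_preimage_setD fst_continuous (oU k) oG.
have bY k : borel_set (@snd X Y @^-1` U' k `\` snd @^-1` H k).
  by have [oH _ _] := hH k; exact: borel_preimage_setD snd_continuous (oU' k) oH.
apply: le_trans (radon_bigsetU_le hlam _ _ _ _ (fun k => borelU (bX k) (bY k))) _.
apply: (@le_trans _ _ (\sum_(k : I) (eta + eta))).
  apply: ler_sum => k _; apply: le_trans (radon_setU_le hlam _ _ (bX k) (bY k)) _.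
  by have [_ _ ?] := hG k; have [_ _ ?] := hH k; lra.
have : (eta + eta) *+ #|{: I}|.+1 = eps.
  by rewrite -mulr_natr /eta; field; rewrite addrC natr1 pnatr_eq0.
rewrite sumr_const mulrSr; lra.
Qed.

Lemma Onbhd_subset {R : realType} {Z : topologicalType} (mu : set Z -> R)
    (m n : nat) (W : 'I_m -> set Z) (V : 'I_n -> set Z) (delta eps : R) :
  (forall j, open (W j)) -> (forall j j', j != j' -> W j `&` W j' = set0) ->
  (forall i, open (V i)) -> 0 <= delta ->
  (forall i, mu (V i) - \sum_(j < m | `[< W j `<=` V i >]) mu (W j) + delta *+ m < eps) ->
  Onbhd mu W delta `<=` Onbhd mu V eps.
Proof.
move=> oW dW oV delta0 approx nu [hnu nuW]; split => // i.
pose P j := `[< W j `<=` V i >].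
have bW j : borel_set (W j) by exact: borel_open.
have UV : \big[setU/set0]_(j < m | P j) W j `<=` V i.
  by elim/big_ind: _ => // [A B AV BV z [/AV|/BV] //|j /asboolP].
have nuV : \sum_(j < m | P j) nu (W j) <= nu (V i).
  rewrite -(radon_bigsetU hnu) ?index_enum_uniq //.
  by apply: radon_le UV => //; [exact: borel_bigsetU|exact: borel_open].
have : \sum_(j < m | P j) (mu (W j) - delta) <= \sum_(j < m | P j) nu (W j).
  by apply: ler_sum => j _; exact/ltW/nuW.
have : \sum_(j < m | P j) delta <= delta *+ m.
  apply: (@le_trans _ _ (\sum_(j < m) delta)); last by rewrite sumr_const card_ord.
  by rewrite [X in _ <= X](bigID P) /= lerDl; apply: sumr_ge0.
rewrite sumrB; have := approx i; lra.
Qed.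

Lemma cells_approximation {R : realType} {X Y : topologicalType}
    {lam : set (X * Y) -> R} {n : nat} {V : 'I_n -> set (X * Y)} {e : R} :
  radon_prob lam -> hausdorff_space (X * Y)%type ->
  regular_space X -> regular_space Y -> (forall i, open (V i)) -> 0 < e ->
  exists m (W1 : 'I_m -> set X) (W2 : 'I_m -> set Y),
    [/\ (forall j, open (W1 j)), (forall j, open (W2 j)),
        (forall j j', j != j' -> (W1 j `*` W2 j) `&` (W1 j' `*` W2 j') = set0),
        (forall j j', disjoint_or_eq (W1 j) (W1 j') /\ disjoint_or_eq (W2 j) (W2 j')) &
        forall i, lam (V i) - \sum_(j < m | `[< W1 j `*` W2 j `<=` V i >])
                                lam (W1 j `*` W2 j) < e].
Proof.
move=> hlam hXY rX rY oV e0.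
have e20 : 0 < e / 2 by rewrite divr_gt0.
have [K hK] := choice (fun i => radon_inner_regular hlam hXY (borel_open (oV i)) e20).
have cK i : compact (K i) by have [] := hK i.
have KV i : K i `<=` V i by have [] := hK i.
have [F [oF coverF]] := compact_rectangle_covers cK oV KV.
have [G [H [oG oH GU HU lam_defect]]] := radon_shrink_rectangles
  (U := fun k : F => (val k).1) (U' := fun k : F => (val k).2) hlam hXY rX rY
  (fun k => (oF _ (valP k)).1) (fun k => (oF _ (valP k)).2) e20.
have [m [W1 [W2 [oW1 oW2 dW dW12 cellP]]]] := product_atoms oG oH GU HU.
exists m, W1, W2; split => // i.
pose P j := `[< W1 j `*` W2 j `<=` V i >].
pose D := rectangle_defect (fun k : F => (val k).1) G (fun k : F => (val k).2) H.
have bW j : borel_set (W1 j `*` W2 j) by apply: borel_open; exact: open_setX.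
have bUW : borel_set (\big[setU/set0]_(j < m | P j) (W1 j `*` W2 j)).
  exact: borel_bigsetU.
have bD : borel_set D.
  apply: borel_bigsetU => k; have [oU oU'] := oF _ (valP k).
  exact: borelU (borel_preimage_setD fst_continuous oU (oG k))
                (borel_preimage_setD snd_continuous oU' (oH k)).
have K_cover : K i `<=` \big[setU/set0]_(j < m | P j) (W1 j `*` W2 j) `|` D.
  move=> p Kp; have [|good] := pselect (D p); first by right.
  have [j [Wp Wsub]] := cellP p good.
  have [AB ABF [ABp ABV]] := coverF i p Kp.
  left; rewrite (bigD1 j) /=; first by left.
  by apply/asboolP => q /(Wsub [` ABF]%fset ABp) /ABV.
have [_ _ lamK] := hK i.
have lamKb : lam (K i) <= lam (\big[setU/set0]_(j < m | P j) (W1 j `*` W2 j) `|` D).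
  by apply: radon_le => //; [exact: borel_closed (compact_closed hXY (cK i))|exact: borelU].
have lamUb := radon_setU_le hlam _ _ bUW bD.
change (lam (V i) - \sum_(j < m | P j) lam (W1 j `*` W2 j) < e).
rewrite -(radon_bigsetU hlam) ?index_enum_uniq //; lra.
Qed.

Theorem lemma6 (R : realType) (X Y : topologicalType)
    (hX : tychonoff_space X) (hY : tychonoff_space Y)
    (lam : set (X * Y) -> R) (hlam : radon_prob lam)
    (n : nat) (V : 'I_n -> set (X * Y)) (hV : forall i, open (V i))
    (eps0 : R) (heps0 : 0 < eps0) :
  forall eps : R, 0 < eps ->
  exists (m : nat) (W1 : 'I_m -> set X) (W2 : 'I_m -> set Y) (delta : R),
    [/\ (forall j, open (W1 j)), (forall j, open (W2 j)),
        (forall j j', j != j' -> (W1 j `*` W2 j) `&` (W1 j' `*` W2 j') = set0),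
        0 < delta &
        [/\ (forall i : 'I_n,
               lam (V i) - \sum_(j < m | `[< W1 j `*` W2 j `<=` V i >])
                             lam (W1 j `*` W2 j) < eps),
            Onbhd lam (fun j => W1 j `*` W2 j) delta `<=` Onbhd lam V eps0,
            (forall j j' : 'I_m,
               fst @` (W1 j `*` W2 j) `&` fst @` (W1 j' `*` W2 j') = set0 \/
               fst @` (W1 j `*` W2 j) = fst @` (W1 j' `*` W2 j')) &
            (forall j j' : 'I_m,
               snd @` (W1 j `*` W2 j) `&` snd @` (W1 j' `*` W2 j') = set0 \/
               snd @` (W1 j `*` W2 j) = snd @` (W1 j' `*` W2 j'))]].
Proof.
move=> eps eps_gt0.
have [[crX hsX] [crY hsY]] := conj hX hY.
pose e := Num.min eps (eps0 / 2).
have e_gt0 : 0 < e by rewrite lt_min eps_gt0 divr_gt0.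
have [m [W1 [W2 [oW1 oW2 dW dW12 approx]]]] := cells_approximation hlam
  (prod_hausdorff hsX hsY) (@completely_regular_regular R X crX)
  (@completely_regular_regular R Y crY) hV e_gt0.
pose delta := eps0 / 2 / m.+1%:R.
have delta_gt0 : 0 < delta by rewrite !divr_gt0.
have mdelta : delta *+ m.+1 = eps0 / 2.
  by rewrite -mulr_natr /delta; field; rewrite addrC natr1 pnatr_eq0.
have e_eps0 : e <= eps0 / 2 by rewrite ge_min lexx orbT.
exists m, W1, W2, delta; split => //; split.
- by move=> i; apply: lt_le_trans (approx i) _; rewrite ge_min lexx.
- apply: (@Onbhd_subset _ _ lam m n (fun j => W1 j `*` W2 j)) => // [j||i].
  + exact: open_setX.
  + exact: ltW.
  + by have := approx i; move: mdelta; rewrite mulrSr; lra.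
- by move=> j j'; apply: image_fst_setX_disjoint_or_eq; case: (dW12 j j').
- by move=> j j'; apply: image_snd_setX_disjoint_or_eq; case: (dW12 j j').
Qed.
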